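(* Let $m\ge1$, $j\in\{0,\ldots,m-1\}$ and let $M_j$ be as in the context (PNS or PNGS version). For every $z'\in M_j$ there is $\epsilon>0$ such that for all $z\in M_j$ with $\|z-z'\|<\epsilon$: $z$ and $z'$ are in optimal position (i.e. $\|z'-z\|=\min_{R\in O(m-j)}\|z'-zR\|$) if and only if $z^Tz'-z'^Tz=0$.
   Context: $\|\cdot\|$ is the Frobenius norm; $O(k,n)=\{v\in\mathbb R^{n\times k}:v^Tv=I_k\}$; $O(k)$ is the orthogonal group; $\mathbb D^k$ and $\mathbb S^{k-1}$ are the open unit ball and unit sphere of $\mathbb R^k$. For $j\in\{1,\ldots,m-1\}$, PNS version: $M_j=\{\binom{v}{\alpha^T}: v\in O(m-j,m+1),\alpha\in\mathbb D^{m-j}\}\subset\mathbb R^{(m+2)\times(m-j)}$; PNGS version: the same with $\alpha=0$. For $j=0$: $M_0=\{\binom{v}{\alpha^T}: v\in O(m,m+1),\alpha\in\mathbb S^{m-1}\}$. $O(m-j)$ acts on $M_j$ from the right by $z\mapsto zR$. *)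

From mathcomp Require Import all_boot all_order all_algebra.
Set Implicit Arguments. Unset Strict Implicit. Unset Printing Implicit Defensive.
Import Order.TTheory GRing.Theory Num.Theory.
Local Open Scope ring_scope.

Definition frob (R : rcfType) (p q : nat) (A : 'M[R]_(p, q)) : R :=
  Num.sqrt (\sum_(i < p) \sum_(l < q) A i l ^+ 2).

Definition orthmx (R : rcfType) (k : nat) (Q : 'M[R]_k) : Prop :=
  Q^T *m Q = 1%:M.

Definition stiefel (R : rcfType) (n k : nat) (v : 'M[R]_(n, k)) : Prop :=
  v^T *m v = 1%:M.

(* M_j inside R^{(m+2) x (m-j)}; z = (v ; alpha^T) with v the upper (m+1)
   rows and alpha^T the last row.  pns = true: PNS version (alpha in the
   open unit ball), pns = false: PNGS version (alpha = 0). *)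
Definition Mj (R : rcfType) (pns : bool) (m j : nat)
    (z : 'M[R]_(m.+1 + 1, m - j)) : Prop :=
  stiefel (usubmx z) /\
  (if j == 0%N then frob (dsubmx z) == 1
   else if pns then frob (dsubmx z) < 1 else dsubmx z == 0).

Definition optimal_position (R : rcfType) (n k : nat) (z z' : 'M[R]_(n, k)) : Prop :=
  forall Q : 'M[R]_k, orthmx Q -> frob (z' - z) <= frob (z' - z *m Q).

From mathcomp Require Import all_boot all_order all_algebra.
From mathcomp Require Import ring lra.
Set Implicit Arguments. Unset Strict Implicit. Unset Printing Implicit Defensive.
Import Order.TTheory GRing.Theory Num.Theory.
Local Open Scope ring_scope.

(* Expanding ||z' - z Q||^2 shows that z and z' are in optimal position iff the
   identity maximises Q |-> tr(A Q) over O(k), where A = z'^T z.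
   If tr(A Q) <= tr A for every rotation Q in a coordinate plane (i, l), the
   first-order term in the rotation angle forces A_il = A_li: A is symmetric.
   Conversely, if A is symmetric and C = 1 - Q, then
   2 (tr A - tr(A Q)) = tr((z C)^T (z' C))
                      = (|z C|^2 + |z' C|^2 - |(z - z') C|^2) / 2,
   and orthonormality of the top blocks gives |z C|^2, |z' C|^2 >= |C|^2 while
   |(z - z') C|^2 <= |z - z'|^2 |C|^2 <= 2 |C|^2 once |z - z'| <= sqrt 2.
   Hence eps = 1 works for every z'. *)

Section RealMatrices.
Variable R : realFieldType.

Definition sqfrob p q (A : 'M[R]_(p, q)) : R := \sum_(i < p) \sum_(l < q) A i l ^+ 2.

Lemma sqfrob_ge0 p q (A : 'M[R]_(p, q)) : 0 <= sqfrob A.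
Proof. by apply: sumr_ge0 => i _; apply: sumr_ge0 => l _; exact: sqr_ge0. Qed.

Lemma sqfrobE p q (A : 'M[R]_(p, q)) : sqfrob A = \tr (A^T *m A).
Proof.
rewrite /sqfrob /mxtrace exchange_big /=; apply: eq_bigr => l _.
by rewrite !mxE; apply: eq_bigr => i _; rewrite !mxE expr2.
Qed.

Lemma mxtrace_trmx_mulC p q (A B : 'M[R]_(p, q)) : \tr (A^T *m B) = \tr (B^T *m A).
Proof. by rewrite -mxtrace_tr trmx_mul trmxK. Qed.

Lemma sqfrobB p q (A B : 'M[R]_(p, q)) :
  sqfrob (A - B) = sqfrob A + sqfrob B - 2 * \tr (A^T *m B).
Proof.
rewrite !sqfrobE [(A - B)^T]linearB /= mulmxBl !mulmxBr !linearB /=.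
rewrite [\tr (B^T *m A)]mxtrace_trmx_mulC; lra.
Qed.

Lemma sqfrob_mulmx_orth p k (A : 'M[R]_(p, k)) (Q : 'M[R]_k) :
  Q *m Q^T = 1%:M -> sqfrob (A *m Q) = sqfrob A.
Proof.
move=> QQt; rewrite !sqfrobE trmx_mul mxtrace_mulC !mulmxA -(mulmxA A) QQt.
by rewrite mulmx1 mxtrace_mulC.
Qed.

Lemma sqfrob_col_mx p q k (A : 'M[R]_(p, k)) (B : 'M[R]_(q, k)) :
  sqfrob (col_mx A B) = sqfrob A + sqfrob B.
Proof.
rewrite /sqfrob big_split_ord /=.
by congr (_ + _); apply: eq_bigr => i _; apply: eq_bigr => l _;
  rewrite ?col_mxEu ?col_mxEd.
Qed.

Lemma cauchy_schwarz n (a b : 'I_n -> R) :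
  (\sum_i a i * b i) ^+ 2 <= (\sum_i a i ^+ 2) * (\sum_i b i ^+ 2).
Proof.
set A := \sum_i a i ^+ 2; set B := \sum_i b i ^+ 2; set C := \sum_i a i * b i.
have AB : A * B = \sum_i \sum_l a i ^+ 2 * b l ^+ 2.
  by rewrite mulr_suml; apply: eq_bigr => i _; rewrite mulr_sumr.
have BA : A * B = \sum_i \sum_l a l ^+ 2 * b i ^+ 2 by rewrite AB exchange_big.
have CC : C ^+ 2 = \sum_i \sum_l (a i * b i) * (a l * b l).
  by rewrite expr2 mulr_suml; apply: eq_bigr => i _; rewrite mulr_sumr.
have lagrange : \sum_i \sum_l (a i * b l - a l * b i) ^+ 2 = A * B + A * B - 2 * C ^+ 2.
  rewrite CC {1}AB BA mulr_sumr -sumrN -!big_split /=.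
  apply: eq_bigr => i _; rewrite mulr_sumr -sumrN -!big_split /=.
  by apply: eq_bigr => l _; ring.
have : 0 <= \sum_i \sum_l (a i * b l - a l * b i) ^+ 2.
  by apply: sumr_ge0 => i _; apply: sumr_ge0 => l _; exact: sqr_ge0.
rewrite lagrange; lra.
Qed.

Lemma sqfrob_mulmx_le p n k (A : 'M[R]_(p, n)) (B : 'M[R]_(n, k)) :
  sqfrob (A *m B) <= sqfrob A * sqfrob B.
Proof.
rewrite /sqfrob mulr_suml; apply: ler_sum => i _.
rewrite [X in _ <= _ * X]exchange_big /= mulr_sumr; apply: ler_sum => l _.
by rewrite mxE; exact: cauchy_schwarz.
Qed.

Lemma sqfrob_mulmx_ge p q k n (z : 'M[R]_(p + q, k)) (C : 'M[R]_(k, n)) :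
  (usubmx z)^T *m usubmx z = 1%:M -> sqfrob C <= sqfrob (z *m C).
Proof.
move=> ortho; rewrite -[z]vsubmxK mul_col_mx sqfrob_col_mx.
rewrite [sqfrob (usubmx z *m C)]sqfrobE trmx_mul -mulmxA (mulmxA _ (usubmx z)).
by rewrite ortho mul1mx -sqfrobE lerDl sqfrob_ge0.
Qed.

Lemma mxtrace_cross_mulmx_ge0 p q k (z z' : 'M[R]_(p + q, k)) (C : 'M[R]_k) :
  (usubmx z)^T *m usubmx z = 1%:M -> (usubmx z')^T *m usubmx z' = 1%:M ->
  sqfrob (z - z') <= 2 -> 0 <= \tr ((z *m C)^T *m (z' *m C)).
Proof.
move=> z_ortho z'_ortho near.
have zC := sqfrob_mulmx_ge C z_ortho; have z'C := sqfrob_mulmx_ge C z'_ortho.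
have diffC : sqfrob ((z - z') *m C) <= 2 * sqfrob C.
  apply: le_trans (sqfrob_mulmx_le _ _) _.
  by rewrite ler_wpM2r ?sqfrob_ge0.
move: diffC; rewrite mulmxBl sqfrobB; lra.
Qed.

Lemma mxtrace_sym_defect k (A Q : 'M[R]_k) : A^T = A -> Q *m Q^T = 1%:M ->
  \tr ((1%:M - Q)^T *m A *m (1%:M - Q)) = 2 * (\tr A - \tr (A *m Q)).
Proof.
move=> A_sym QQt.
rewrite [(1%:M - Q)^T]linearB /= trmx1 !mulmxBl mul1mx !mulmxBr !mulmx1.
rewrite !linearD !linearN /=.
have -> : \tr (Q^T *m A *m Q) = \tr A.
  by rewrite mxtrace_mulC mulmxA QQt mul1mx.
rewrite mxtrace_trmx_mulC A_sym; lra.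
Qed.

Lemma mxtrace_mulmx_orth_le p q k (z z' : 'M[R]_(p + q, k)) (Q : 'M[R]_k) :
  (usubmx z)^T *m usubmx z = 1%:M -> (usubmx z')^T *m usubmx z' = 1%:M ->
  sqfrob (z - z') <= 2 -> (z'^T *m z)^T = z'^T *m z -> Q^T *m Q = 1%:M ->
  \tr (z'^T *m z *m Q) <= \tr (z'^T *m z).
Proof.
move=> z_ortho z'_ortho near A_sym /mulmx1C QQt.
have := mxtrace_cross_mulmx_ge0 (1%:M - Q) z_ortho z'_ortho near.
have -> : (z *m (1%:M - Q))^T *m (z' *m (1%:M - Q)) =
          (1%:M - Q)^T *m (z'^T *m z)^T *m (1%:M - Q).
  by rewrite !trmx_mul trmxK !mulmxA.
rewrite A_sym mxtrace_sym_defect //; lra.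
Qed.

Definition givens k (i l : 'I_k) (c s : R) : 'M[R]_k :=
  1%:M + (c - 1) *: (delta_mx i i + delta_mx l l) + s *: (delta_mx i l - delta_mx l i).

Lemma givens_orth k (i l : 'I_k) (c s : R) : i != l -> c ^+ 2 + s ^+ 2 = 1 ->
  (givens i l c s)^T *m givens i l c s = 1%:M.
Proof.
move=> /negbTE il cs; have li : (l == i) = false by rewrite eq_sym.
rewrite /givens; set D : 'M[R]_k := delta_mx i i + delta_mx l l.
set P : 'M[R]_k := delta_mx i l - delta_mx l i.
have [DD DP PD PP] : [/\ D *m D = D, D *m P = P, P *m D = P & P *m P = - D].
  split; rewrite /D /P !(mulmxDl, mulmxDr, mulmxBl, mulmxBr, mulmxN, mulNmx);
  rewrite !mul_delta_mx_cond ?eqxx ?il ?li ?mulr1n ?mulr0n;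
  by apply/matrixP => x y; rewrite !mxE; lra.
have DT : D^T = D by rewrite /D linearD /= !trmx_delta.
have PT : P^T = - P by rewrite /P linearB /= !trmx_delta opprB.
clearbody D P; rewrite !linearD /= !linearZ /= trmx1 DT PT.
rewrite !mulmxDl !mulmx1 !mul1mx -!scalemxAl !mulNmx DD DP PD PP.
apply/matrixP => x y; rewrite !mxE.
apply/eqP; rewrite -subr_eq0; apply/eqP.
by transitivity (D x y * (c ^+ 2 + s ^+ 2 - 1)); [ring | rewrite cs subrr mulr0].
Qed.

Lemma mxtrace_mulmx_givens k (A : 'M[R]_k) (i l : 'I_k) (c s : R) :
  \tr (A *m givens i l c s) = \tr A + (c - 1) * (A i i + A l l) + s * (A l i - A i l).
Proof.
have tr_delta (x y : 'I_k) : \tr (A *m delta_mx x y) = A y x.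
  rewrite /mxtrace (bigD1 y) //= big1 ?addr0 => [|z /negbTE zy].
    rewrite mxE (bigD1 x) //= big1 ?addr0 ?mxE ?eqxx ?mulr1 // => w /negbTE wx.
    by rewrite mxE wx mulr0.
  by rewrite mxE big1 // => w _; rewrite mxE zy andbF mulr0.
rewrite /givens !mulmxDr mulmx1 -!scalemxAr !mxtraceD !mxtraceZ mulmxDr mulmxBr.
by rewrite mxtraceD linearB /= !tr_delta.
Qed.

Lemma linear_le_quadratic_eq0 (d s : R) : (forall t, t * d <= t ^+ 2 * s) -> d = 0.
Proof.
move=> le_dt; set u := `|s| + 1.
have u_gt0 : 0 < u by rewrite ltr_pwDr ?normr_ge0.
have s_le_u : s <= u by rewrite /u; have := ler_norm s; lra.
have inv_gt0 : 0 < (2 * u)^-1 by rewrite invr_gt0 mulr_gt0.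
pose t := d / (2 * u).
have : t * d <= t * d / 2.
  apply: le_trans (le_dt t) _.
  have -> : t * d / 2 = t ^+ 2 * u by rewrite /t; field; rewrite gt_eqF.
  by rewrite ler_wpM2l ?sqr_ge0.
have -> : t * d = d ^+ 2 / (2 * u) by rewrite /t expr2 mulrAC.
move=> le_half; have : d ^+ 2 / (2 * u) <= 0 by lra.
rewrite pmulr_lle0 // => d2_le0.
by apply/eqP; rewrite -sqrf_eq0 eq_le d2_le0 sqr_ge0.
Qed.

Lemma mxtrace_max_sym k (A : 'M[R]_k) :
  (forall Q, Q^T *m Q = 1%:M -> \tr (A *m Q) <= \tr A) -> A^T = A.
Proof.
move=> trace_max; apply/matrixP => l i; rewrite mxE.
have [-> // | il] := eqVneq i l; apply/eqP; rewrite eq_sym -subr_eq0; apply/eqP.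
apply: (@linear_le_quadratic_eq0 _ (A i i + A l l)) => t.
have t2_gt0 : 0 < 1 + t ^+ 2 by rewrite ltr_pwDl ?sqr_ge0.
(* Rational parametrisation of the circle, t = tan (theta / 2). *)
pose c := (1 - t ^+ 2) / (1 + t ^+ 2); pose s := 2 * t / (1 + t ^+ 2).
have cs : c ^+ 2 + s ^+ 2 = 1 by rewrite /c /s; field; rewrite gt_eqF.
have := trace_max _ (givens_orth il cs); rewrite mxtrace_mulmx_givens -addrA gerDl.
have -> : (c - 1) * (A i i + A l l) + s * (A l i - A i l) =
          2 * (t * (A l i - A i l) - t ^+ 2 * (A i i + A l l)) / (1 + t ^+ 2).
  by rewrite /c /s; field; rewrite gt_eqF.
rewrite pmulr_lle0 ?invr_gt0 //; lra.
Qed.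

End RealMatrices.

Lemma optimal_positionE (R : rcfType) n k (z z' : 'M[R]_(n, k)) :
  optimal_position z z' <->
  (forall Q, orthmx Q -> \tr (z'^T *m z *m Q) <= \tr (z'^T *m z)).
Proof.
have sqfrob_dist Q : orthmx Q ->
    sqfrob (z' - z *m Q) = sqfrob z' + sqfrob z - 2 * \tr (z'^T *m z *m Q).
  by move=> /mulmx1C QQt; rewrite sqfrobB sqfrob_mulmx_orth // mulmxA.
have id_orth : orthmx (1%:M : 'M[R]_k) by rewrite /orthmx trmx1 mulmx1.
rewrite /optimal_position /frob.
have -> : z' - z = z' - z *m 1%:M by rewrite mulmx1.
split => opt Q orthQ; move: (opt Q orthQ);
  rewrite -!/(sqfrob _) ler_sqrt ?sqfrob_ge0 // !sqfrob_dist // mulmx1; lra.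
Qed.

Theorem corollary2p7 (R : rcfType) (pns : bool) (m j : nat) :
  (1 <= m)%N -> (j < m)%N ->
  forall z' : 'M[R]_(m.+1 + 1, m - j), Mj pns z' ->
  exists2 eps : R, 0 < eps &
    forall z : 'M[R]_(m.+1 + 1, m - j), Mj pns z -> frob (z - z') < eps ->
      (optimal_position z z' <-> z^T *m z' - z'^T *m z = 0).
Proof.
move=> _ _ z' [z'_ortho _]; exists 1 => // z [z_ortho _] near.
have {}near : sqfrob (z - z') <= 2.
  have : Num.sqrt (sqfrob (z - z')) < Num.sqrt 1 by rewrite sqrtr1.
  by rewrite ltr_sqrt ?ltr01 //; lra.
have -> : z^T *m z' = (z'^T *m z)^T by rewrite trmx_mul trmxK.
rewrite optimal_positionE; split => [/mxtrace_max_sym -> | /eqP]; first exact: subrr.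
rewrite subr_eq0 => /eqP A_sym Q; exact: mxtrace_mulmx_orth_le.
Qed.
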